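(* Let $G$ be a connected graph with a list-assignment $L$ such that $|L(u)|\ge\deg(u)+1$ for all $u\in V(G)$. If there exist $v,w\in V(G)$ such that $vw\in E(G)$, $L(v)\not\subseteq L(w)$, and $G-v$ is connected, then $\alpha\sim\beta$ whenever $\alpha$ and $\beta$ are both unfrozen $L$-colourings.
   Context: An $L$-colouring is a proper colouring $\varphi$ with $\varphi(v)\in L(v)$ for all $v$. A vertex $u$ is frozen under $\varphi$ if every colour of $L(u)\setminus\{\varphi(u)\}$ appears on a neighbour of $u$; a colouring is unfrozen if at least one vertex is not frozen. $\alpha\sim\beta$ means $\alpha$ can be transformed into $\beta$ by a sequence of single-vertex recolouring steps, each keeping the colouring a proper $L$-colouring. *)

From Stdlib Require Import Relations.
From mathcomp Require Import all_boot.
Set Implicit Arguments. Unset Strict Implicit. Unset Printing Implicit Defensive.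

(* Colours range over a finite type C (only finitely many colours occur in
   the lists of a finite graph). *)

Definition simple_graph (T : finType) (e : rel T) : Prop :=
  symmetric e /\ irreflexive e.

Definition deg (T : finType) (e : rel T) (u : T) : nat := #|[set x | e u x]|.

Definition connected_graph (T : finType) (e : rel T) : Prop :=
  forall x y : T, connect e x y.

Definition connected_minus (T : finType) (e : rel T) (v : T) : Prop :=
  forall x y : T, x != v -> y != v ->
    connect [rel a b | [&& e a b, a != v & b != v]] x y.

Definition Lcolouring (T C : finType) (e : rel T) (L : T -> {set C})
  (phi : T -> C) : Prop :=
  (forall u, phi u \in L u) /\ (forall u x, e u x -> phi u != phi x).

Definition frozen (T C : finType) (e : rel T) (L : T -> {set C})
  (phi : T -> C) (u : T) : Prop :=
  forall c, c \in L u -> c != phi u -> exists x, e u x /\ phi x = c.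

Definition unfrozen (T C : finType) (e : rel T) (L : T -> {set C})
  (phi : T -> C) : Prop :=
  exists u, ~ frozen e L phi u.

Definition recolour_step (T C : finType) (e : rel T) (L : T -> {set C})
  (a b : T -> C) : Prop :=
  Lcolouring e L a /\ Lcolouring e L b /\
  exists u, forall x, x != u -> a x = b x.

Definition reconf (T C : finType) (e : rel T) (L : T -> {set C}) :
  relation (T -> C) :=
  clos_refl_trans (T -> C) (recolour_step e L).

From Stdlib Require Import Relations Classical.
From mathcomp Require Import all_boot zify.
Set Implicit Arguments. Unset Strict Implicit. Unset Printing Implicit Defensive.

(* Fix a colour c in L(v) but not in L(w).

   Step 1: every unfrozen colouring reconfigures to one with v coloured c.
   Delete the vertices of a breadth-first tree rooted at v, farthest first,
   keeping the colours of deleted vertices fixed and some remaining vertex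
   unfrozen: if the deleted vertex is the only unfrozen one, recolouring it
   unfreezes its parent. What is left is a star centred at v containing w, where
   a case analysis on the leaves coloured c (the "blockers") concludes; w is
   never a blocker since c is not in L(w).

   Step 2: any two colourings with v coloured c are connected. In G - v every
   vertex x keeps at least deg_{G-v}(x) + 1 colours not used by v, and w one more
   as c is not in L(w). Peeling a spanning tree of G - v rooted at w from its
   highest vertex z, recolour the rest so that the target colour of z is free
   (greedily, the extra colour at w paying for the root), move z, and recurse. *)

Section ShortestWalks.
Variables (T : finType) (R : rel T) (r : T).
Hypothesis symR : symmetric R.

(* Vertices not reachable from [r] get distance 0, which makes [dist] total. *)
Definition walk_of_size x n :=
  [exists s : n.-tuple T, path R r s && (last r s == x)] || ~~ connect R r x.

Lemma walk_of_size_exists x : exists n, walk_of_size x n.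
Proof.
have [/connectP[s ps ->]|nc] := boolP (connect R r x); last first.
  by exists 0; rewrite /walk_of_size nc orbT.
by exists (size s); apply/orP; left; apply/existsP; exists (in_tuple s); rewrite /= ps eqxx.
Qed.

Definition dist x := ex_minn (walk_of_size_exists x).

Lemma dist_le_size s : path R r s -> dist (last r s) <= size s.
Proof.
move=> ps; rewrite /dist; case: ex_minnP => m _; apply.
by apply/orP; left; apply/existsP; exists (in_tuple s); rewrite /= ps eqxx.
Qed.

Lemma shortest_walk x : connect R r x ->
  exists s, [/\ path R r s, last r s = x & size s = dist x].
Proof.
move=> crx; rewrite /dist; case: ex_minnP => n; rewrite /walk_of_size crx orbF.
by case/existsP=> s /andP[ps /eqP ls] _; exists s; rewrite size_tuple.
Qed.

Definition parent x := odflt r [pick y | [&& R x y, connect R r y & dist y < dist x]].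

Lemma parentP x : connect R r x -> x != r ->
  [/\ connect R r (parent x), R x (parent x) & dist (parent x) < dist x].
Proof.
move=> crx xr; rewrite /parent; case: pickP => [y /and3P[] //|none]; exfalso.
have [s [ps ls ss]] := shortest_walk crx.
case/lastP: s ps ls ss => [|s y] ps ls ss; first by rewrite -ls eqxx in xr.
move: ps ls; rewrite rcons_path last_rcons => /andP[ps Ry] yx; subst y.
have crs : connect R r (last r s) by apply/connectP; exists s.
by move: (none (last r s)); rewrite symR Ry crs -ss size_rcons ltnS dist_le_size.
Qed.

Lemma dist_eq0 x : connect R r x -> dist x = 0 -> x = r.
Proof. by case/shortest_walk=> s [_ <- ss] d0; move: ss; rewrite d0 => /size0nil ->. Qed.

Lemma dist_adj x : R r x -> dist x <= 1.
Proof. by move=> Rx; have := @dist_le_size [:: x]; rewrite /= Rx; apply. Qed.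

End ShortestWalks.

Lemma exists_argmax (T : finType) (S : {set T}) (h : T -> nat) x0 : x0 \in S ->
  exists2 z, z \in S & forall x, x \in S -> h x <= h z.
Proof. by move=> x0S; case: (arg_maxnP h x0S) => z; exists z. Qed.

Section Colourings.
Variables (T C : finType) (e : rel T) (L : T -> {set C}).
Hypotheses (e_sym : symmetric e) (e_irr : irreflexive e).
Hypothesis Ldeg : forall x, deg e x + 1 <= #|L x|.
Implicit Types (S : {set T}) (f g k : T -> C) (x y z : T) (d : C).

Definition nbhd x := [set y | e x y].

Definition recolour f z d x := if x == z then d else f x.

Lemma recolour_at f z d : recolour f z d z = d.
Proof. by rewrite /recolour eqxx. Qed.

Lemma recolour_other f z d x : x != z -> recolour f z d x = f x.
Proof. by rewrite /recolour => /negbTE ->. Qed.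

Lemma edge_neq x y : e x y -> x != y.
Proof. by apply: contraTneq => ->; rewrite e_irr. Qed.

Lemma recolour_reconf f z d : Lcolouring e L f -> d \in L z ->
  (forall y, e z y -> f y != d) ->
  Lcolouring e L (recolour f z d) /\ reconf e L f (recolour f z d).
Proof.
move=> [fL fP] dL dN.
have colL : Lcolouring e L (recolour f z d).
  split=> [x|x y exy]; rewrite /recolour.
    by case: eqP => [->|_].
  case: (x =P z) => [xz|_]; case: (y =P z) => [yz|_].
  - by move: exy; rewrite xz yz e_irr.
  - by rewrite eq_sym; apply: dN; rewrite -xz.
  - by apply: dN; rewrite -yz e_sym.
  - exact: fP.
split=> //; apply: rt_step; do 2!split=> //.
by exists z => x /recolour_other ->.
Qed.

Lemma reconf_sym f g : reconf e L f g -> reconf e L g f.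
Proof.
elim=> [x y [Lx [Ly [z Hz]]]|x|x y k _ IH1 _ IH2].
- by apply: rt_step; do 2!split=> //; exists z => t /Hz.
- exact: rt_refl.
- exact: rt_trans IH2 IH1.
Qed.

Lemma reconf_trans f g k : reconf e L f g -> reconf e L g k -> reconf e L f k.
Proof. exact: rt_trans. Qed.

Lemma reconf_colouring f g : reconf e L f g -> Lcolouring e L f -> Lcolouring e L g.
Proof. by elim=> [x y [_ []]|x|x y k _ IH1 _ IH2 /IH1 /IH2]. Qed.

Lemma not_frozen_free f y : ~ frozen e L f y ->
  exists d, [/\ d \in L y, d != f y & forall x, e y x -> f x != d].
Proof.
move=> nF; apply: NNPP => nfree; apply: nF => d dL dy; apply: NNPP => nused.
by apply: nfree; exists d; split=> // x eyx; apply/eqP => fx; apply: nused; exists x.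
Qed.

Lemma free_not_frozen f y d : d \in L y -> d != f y ->
  (forall x, e y x -> f x != d) -> ~ frozen e L f y.
Proof. by move=> dL dy dN /(_ d dL dy)[x [eyx /eqP]]; apply/negP/dN. Qed.

Lemma recolour_not_frozen f z d : Lcolouring e L f -> d != f z ->
  ~ frozen e L (recolour f z d) z.
Proof.
move=> [fL fP] dz; apply: (@free_not_frozen _ _ (f z)) => //.
  by rewrite recolour_at eq_sym.
by move=> x ezx; rewrite recolour_other ?(eq_sym x) ?edge_neq // eq_sym fP.
Qed.

(* By the degree bound, the at most [#|L y| - 1] neighbours of a frozen [y] must
   cover [L y :\ f y], hence bijectively. *)
Lemma frozen_nbhd f y : frozen e L f y ->
  f @: nbhd y = L y :\ f y /\ {in nbhd y &, injective f}.
Proof.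
move=> Fy.
have sub : L y :\ f y \subset f @: nbhd y.
  apply/subsetP=> d /setD1P[dy dL]; have [x [eyx <-]] := Fy d dL dy.
  by apply: imset_f; rewrite inE.
have le_img : #|f @: nbhd y| <= #|nbhd y| := leq_imset_card f _.
have le_nb : #|nbhd y| <= #|L y :\ f y|.
  have := Ldeg y; rewrite /deg -/(nbhd y) (cardsD1 (f y)).
  by case: (f y \in L y); rewrite ?add0n ?add1n addn1 // => /ltnW.
split; first by apply/esym/eqP; rewrite eqEcard sub (leq_trans le_img le_nb).
apply/imset_injP; rewrite eqn_leq le_img /=.
exact: leq_trans le_nb (subset_leq_card sub).
Qed.

Lemma frozen_nbr_colour f y x : frozen e L f y -> e y x -> f x \in L y.
Proof.
case/frozen_nbhd=> img _ eyx; have : f x \in f @: nbhd y by apply: imset_f; rewrite inE.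
by rewrite img => /setD1P[].
Qed.

Lemma frozen_nbr_inj f y x1 x2 : frozen e L f y -> e y x1 -> e y x2 ->
  f x1 = f x2 -> x1 = x2.
Proof. by case/frozen_nbhd=> _ inj ex1 ex2; apply: inj; rewrite inE. Qed.

Lemma same_colour_nbrs_not_frozen f y x1 x2 : e y x1 -> e y x2 -> x1 != x2 ->
  f x1 = f x2 -> ~ frozen e L f y.
Proof. by move=> ex1 ex2 /eqP x12 fx Fy; apply/x12/(frozen_nbr_inj Fy). Qed.

(* The old colour of [z] becomes free at its frozen neighbour [y]. *)
Lemma recolour_nbr_not_frozen f z d y : Lcolouring e L f -> frozen e L f y ->
  e z y -> d != f z -> ~ frozen e L (recolour f z d) y.
Proof.
move=> [_ fP] Fy ezy dz; have yz : y != z by rewrite eq_sym edge_neq.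
apply: (@free_not_frozen _ _ (f z)).
- by apply: frozen_nbr_colour Fy _; rewrite e_sym.
- by rewrite recolour_other // fP.
move=> x eyx; have [->|xz] := eqVneq x z; first by rewrite recolour_at.
rewrite recolour_other //; apply: contra_neq xz; apply: frozen_nbr_inj Fy eyx _.
by rewrite e_sym.
Qed.

Lemma frozen_nbr_neq f y x1 x2 : frozen e L f y -> e y x1 -> e y x2 ->
  x1 != x2 -> f x1 != f x2.
Proof. by move=> Fy ex1 ex2; apply: contra_neq; apply: frozen_nbr_inj Fy ex1 ex2. Qed.

Definition avail f S x := L x :\: f @: (nbhd x :\: S).

Lemma avail_ext f g S x : (forall y, y \notin S -> f y = g y) ->
  avail f S x = avail g S x.
Proof.
move=> fg; congr (_ :\: _); apply: eq_in_imset => y.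
by case/setDP=> _; apply: fg.
Qed.

Lemma avail_setT f x : avail f setT x = L x.
Proof. by rewrite /avail setDT imset0 setD0. Qed.

Lemma avail_del_far f S z x : ~~ e x z -> avail f (S :\ z) x = avail f S x.
Proof.
move=> nxz; rewrite /avail (_ : nbhd x :\: (S :\ z) = nbhd x :\: S) //.
apply/setP => y; rewrite !inE.
by have [->|] := eqVneq y z; rewrite ?(negbTE nxz) ?andbF.
Qed.

Lemma avail_del_mem f S z x d : d \in avail f S x -> d != f z ->
  d \in avail f (S :\ z) x.
Proof.
case/setDP=> dL dN dz; apply/setDP; split=> //; apply: contra dN.
case/imsetP=> y /setDP[eyx yS] dy; rewrite dy in dz *; apply: imset_f; apply/setDP; split=> //.
move: yS; apply: contra => yS; rewrite !inE yS andbT.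
by apply: contra_neq dz => ->.
Qed.

Lemma card_avail_del f S z x (F : {set C}) :
  #|avail f S x :\: F| <= #|avail f (S :\ z) x :\: F| + e x z.
Proof.
case exz: (e x z); last by rewrite avail_del_far ?exz ?addn0.
rewrite (cardsD1 (f z) (avail f S x :\: F)) addnC leq_add ?leq_b1 //.
apply/subset_leq_card/subsetP => d /setD1P[dz /setDP[dA dF]].
by apply/setDP; split=> //; apply: avail_del_mem.
Qed.

Lemma avail_nbr f S z y d : d \in avail f S z -> e z y -> y \notin S -> f y != d.
Proof.
case/setDP=> _ dN ezy yS; apply: contraNneq dN => <-.
by apply: imset_f; rewrite !inE ezy yS.
Qed.

Lemma card_nbhd_del S z x : z \in S ->
  #|nbhd x :&: S| = #|nbhd x :&: (S :\ z)| + e x z.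
Proof.
by move=> zS; rewrite setIDA (cardsD1 z (nbhd x :&: S)) addnC !inE zS andbT.
Qed.

Lemma slack_del f S z x (F : {set C}) n : z \in S ->
  #|nbhd x :&: S| + n <= #|avail f S x :\: F| ->
  #|nbhd x :&: (S :\ z)| + n <= #|avail f (S :\ z) x :\: F|.
Proof.
move=> zS; rewrite (card_nbhd_del x zS) => slack.
by have := card_avail_del f S z x F; case: (e x z) slack; lia.
Qed.

Lemma notin_setD1 S z x : x \notin S :\ z -> x = z \/ x \notin S.
Proof. by rewrite in_setD1 negb_and negbK; case: eqP => [|_]; [left | right]. Qed.

Definition colouring_off S f :=
  (forall x, x \notin S -> f x \in L x) /\
  (forall x y, x \notin S -> y \notin S -> e x y -> f x != f y).

Lemma colouring_offW S f : Lcolouring e L f -> colouring_off S f.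
Proof. by case=> fL fP; split=> [x _|x y _ _]; [apply: fL | apply: fP]. Qed.

Lemma colouring_off0 f : colouring_off set0 f -> Lcolouring e L f.
Proof. by case=> fL fP; split=> [x|x y]; [apply: fL | apply: fP]; rewrite inE. Qed.

Lemma colouring_off_recolour S f z d : z \in S -> d \in avail f S z ->
  colouring_off S f -> colouring_off (S :\ z) (recolour f z d).
Proof.
move=> zS dA [fL fP]; have zx x : x \notin S -> x != z by apply: contraNneq => ->.
split=> [x /notin_setD1[->|xS]|x y /notin_setD1[->|xS] /notin_setD1[->|yS] exy].
- by rewrite recolour_at; case/setDP: dA.
- by rewrite recolour_other ?zx ?fL.
- by rewrite e_irr in exy.
- by rewrite recolour_at recolour_other ?zx // eq_sym (avail_nbr dA exy yS).
- by rewrite recolour_at recolour_other ?zx // (avail_nbr dA _ xS) // e_sym.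
- by rewrite !recolour_other ?zx ?fP.
Qed.

Definition rooted_tree S r (h : T -> nat) (p : T -> T) :=
  forall x, x \in S -> x != r -> [/\ p x \in S, e x (p x) & h (p x) < h x].

Lemma rooted_tree_del S r h p z : rooted_tree S r h p ->
  (forall x, x \in S -> x != r -> h x <= h z) -> rooted_tree (S :\ z) r h p.
Proof.
move=> tree zmax x /setD1P[xz xS] xr; have [pS ep hp] := tree x xS xr.
split=> //; rewrite in_setD1 pS andbT.
by apply: contraTneq hp => ->; rewrite -leqNgt zmax.
Qed.

(* Colour [S] greedily by decreasing height: the parent of the highest vertex is
   still uncoloured, which leaves it one spare colour. *)
Lemma extend_colouring S r h p g (F : T -> {set C}) :
  rooted_tree S r h p -> colouring_off S g ->
  (forall x, x \in S -> #|nbhd x :&: S| + (x == r) <= #|avail g S x :\: F x|) ->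
  exists k, [/\ Lcolouring e L k, forall x, x \notin S -> k x = g x
              & forall x, x \in S -> k x \notin F x].
Proof.
have [n] := ubnP #|S|; elim: n => // n IH in S g *; rewrite ltnS => leSn tree gS slack.
have [S0|[z0 z0S]] := set_0Vmem S.
  exists g; split=> // [|x]; last by rewrite S0 inE.
  by apply: colouring_off0; rewrite -S0.
have [z zS zmax] := exists_argmax h z0S.
have [col colA colF] : exists2 col, col \in avail g S z & col \notin F z.
  suff : 0 < #|avail g S z :\: F z| by rewrite card_gt0 => /set0Pn[col /setDP[]]; exists col.
  apply: leq_trans (slack z zS); have [->|zr] := eqVneq z r; first by rewrite addn1.
  have [pS ep _] := tree z zS zr; rewrite addn0 card_gt0; apply/set0Pn.
  by exists (p z); rewrite !inE ep pS.
have zx x : x \notin S -> x != z by apply: contraNneq => ->.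
have ltSn : #|S :\ z| < n by move: leSn; rewrite (cardsD1 z S) zS.
have slack' x : x \in S :\ z ->
    #|nbhd x :&: (S :\ z)| + (x == r) <= #|avail (recolour g z col) (S :\ z) x :\: F x|.
  case/setD1P=> _ xS; apply: slack_del zS _.
  by rewrite (@avail_ext _ g) => [|y /zx/recolour_other]; [apply: slack|].
have [k [kL kg kF]] := IH _ _ ltSn (rooted_tree_del tree (fun x xS _ => zmax x xS))
  (colouring_off_recolour zS colA gS) slack'.
exists k; split=> // [x xS|x xS].
  by rewrite kg ?recolour_other ?zx // in_setD1 (negbTE xS) andbF.
have [->|xz] := eqVneq x z; first by rewrite kg ?recolour_at // !inE eqxx.
by apply: kF; rewrite in_setD1 xz.
Qed.

(* Let [z] be the highest vertex of [S]. Recolour [S :\ z] (by induction) into a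
   colouring avoiding [g z] given by [extend_colouring], move [z] to [g z], and
   recolour [S :\ z] again (by induction) into [g]. *)
Lemma reconf_agree_outside S r h p f g :
  rooted_tree S r h p -> Lcolouring e L f -> Lcolouring e L g ->
  (forall x, x \notin S -> f x = g x) ->
  (forall x, x \in S -> #|nbhd x :&: S| + (x == r).+1 <= #|avail f S x|) ->
  reconf e L f g.
Proof.
have [n] := ubnP #|S|; elim: n => // n IH in S f g *; rewrite ltnS => leSn tree fL gL fg slack.
have [S0|[z0 z0S]] := set_0Vmem S.
  by apply: rt_step; do 2!split=> //; exists r => x _; apply: fg; rewrite S0 inE.
have [z zS zmax] := exists_argmax h z0S.
have zx x : x \notin S -> x != z by apply: contraNneq => ->.
have ltSn : #|S :\ z| < n by move: leSn; rewrite (cardsD1 z S) zS.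
have tree' := rooted_tree_del tree (fun x xS _ => zmax x xS).
have slack' f' : (forall y, y \notin S -> f' y = f y) -> forall x, x \in S :\ z ->
    #|nbhd x :&: (S :\ z)| + (x == r).+1 <= #|avail f' (S :\ z) x|.
  move=> f'f x /setD1P[_ xS]; rewrite -[avail _ _ _]setD0; apply: slack_del zS _.
  by rewrite setD0 (avail_ext _ f'f); apply: slack.
have slack_gz x : x \in S :\ z ->
    #|nbhd x :&: (S :\ z)| + (x == r) <= #|avail f (S :\ z) x :\ g z|.
  move/(slack' f (fun _ _ => erefl)); rewrite (cardsD1 (g z) (avail _ _ _)) addnS.
  by case: (_ \in _); rewrite ?add1n ?add0n // => /ltnW.
have [k [kL kf kgz]] :=
  extend_colouring (F := fun=> [set g z]) tree' (colouring_offW _ fL) slack_gz.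
have fk : reconf e L f k.
  apply: IH ltSn tree' fL kL (fun x xS => esym (kf x xS)) _.
  exact: slack'.
have kz y : e z y -> k y != g z.
  move=> ezy; have [ySz|ySz] := boolP (y \in S :\ z); first by have := kgz y ySz; rewrite inE.
  have [yz|yS] := notin_setD1 ySz; first by rewrite yz e_irr in ezy.
  by rewrite kf // fg // eq_sym; case: gL => _; apply.
have [k'L kk'] := recolour_reconf kL (gL.1 z) kz.
apply: reconf_trans fk (reconf_trans kk' _); apply: IH ltSn tree' k'L gL _ (slack' _ _).
- move=> x /notin_setD1[->|xS]; first by rewrite recolour_at.
  by rewrite recolour_other ?zx // kf ?fg // in_setD1 (negbTE xS) andbF.
- by move=> y yS; rewrite recolour_other ?zx // kf // in_setD1 (negbTE yS) andbF.
Qed.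

Section ReachColour.
Variables (u w : T) (c : C).
Hypotheses (euw : e u w) (cw : c \notin L w).

Definition reaches f := exists2 g, reconf e L f g & g u = c.

Lemma reaches_reconf f g : reconf e L f g -> reaches g -> reaches f.
Proof. by move=> fg [k gk ku]; exists k => //; apply: reconf_trans fg gk. Qed.

Lemma colour_w_neq_c f : Lcolouring e L f -> f w != c.
Proof. by case=> fL _; apply: contraNneq cw => <-. Qed.

Definition fixed_off S f0 g := Lcolouring e L g /\ forall x, x \notin S -> g x = f0 x.

Section Star.
Variables (S : {set T}) (f0 : T -> C).
Hypotheses (uS : u \in S) (wS : w \in S) (cu : c \in avail f0 S u).
Hypothesis star : forall x, x \in S -> x != u -> e u x.
(* The induction hypothesis of [reaches_unfrozen]: a leaf other than [w] and not
   coloured [c] can be deleted, provided an unfrozen vertex remains. *)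
Hypothesis reaches_del : forall z g, z \in S -> z != u -> z != w ->
  fixed_off S f0 g -> g z != c ->
  (exists y, [/\ y \in S, y != z & ~ frozen e L g y]) -> reaches g.

Definition blocker g x := [/\ x \in S, x != u & g x = c].

Lemma blocker_neq_w g x : fixed_off S f0 g -> blocker g x -> x != w.
Proof.
by case=> gL _ [_ _ gx]; apply/eqP => xw; move: (colour_w_neq_c gL); rewrite -xw gx eqxx.
Qed.

Lemma reaches_recolour g x d : fixed_off S f0 g -> x \in S -> d \in L x ->
  (forall y, e x y -> g y != d) ->
  (fixed_off S f0 (recolour g x d) -> reaches (recolour g x d)) -> reaches g.
Proof.
move=> [gL g0] xS dL dN ok; have [gL' gg'] := recolour_reconf gL dL dN.
apply: reaches_reconf gg' (ok _); split=> // y yS.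
by rewrite recolour_other ?g0 //; apply: contraNneq yS => ->.
Qed.

Lemma reaches_pass_colour g x y d : fixed_off S f0 g -> x \in S -> y \in S -> e y x ->
  d \in L x -> d != g x -> (forall z, e x z -> g z != d) ->
  g x \in L y -> (forall z, e y z -> z != x -> g z != g x) ->
  (fixed_off S f0 (recolour (recolour g x d) y (g x)) ->
     reaches (recolour (recolour g x d) y (g x))) -> reaches g.
Proof.
move=> Og xS yS eyx dL dx dN gxL gxN ok.
apply: (reaches_recolour Og xS dL dN) => O1; apply: (reaches_recolour O1 yS gxL _ ok).
move=> z eyz; have [->|zx] := eqVneq z x; first by rewrite recolour_at.
by rewrite recolour_other // gxN.
Qed.

Lemma reaches_no_blocker g : fixed_off S f0 g -> (forall x, ~ blocker g x) -> reaches g.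
Proof.
move=> [gL g0] noB; have cL : c \in L u by case/setDP: cu.
have cN y : e u y -> g y != c.
  move=> euy; have [yS|yS] := boolP (y \in S).
    by apply/eqP => gy; apply: (noB y); split; rewrite // eq_sym edge_neq.
  by rewrite g0 // (avail_nbr cu euy yS).
have [_ gg'] := recolour_reconf gL cL cN.
by exists (recolour g u c); rewrite ?recolour_at.
Qed.

Lemma only_blocker_removed g g' b : (forall x, blocker g x -> x = b) -> g' b != c ->
  (forall x, x \in S -> x != u -> x != b -> g' x = g x) -> forall x, ~ blocker g' x.
Proof.
move=> onlyb g'b g'g x [xS xu g'x]; have [xb|xb] := eqVneq x b.
  by rewrite -xb g'x eqxx in g'b.
have Bx : blocker g x by split; rewrite // -g'g.
by rewrite (onlyb x Bx) eqxx in xb.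
Qed.

Lemma one_blocker g b : fixed_off S f0 g -> blocker g b ->
  (forall x, blocker g x -> x = b) -> ~ frozen e L g b \/ ~ frozen e L g u -> reaches g.
Proof.
move=> Og [bS bu gb] onlyb Ubu; have [[_ gP] _] := Og.
case: (classic (frozen e L g b)) => [Fb|Ub]; last first.
  have [d [dL db dN]] := not_frozen_free Ub.
  apply: (reaches_recolour Og bS dL dN) => O1; apply: reaches_no_blocker O1 _.
  apply: only_blocker_removed onlyb _ _ => [|x _ _ xb]; first by rewrite recolour_at -gb.
  by rewrite recolour_other.
have [d [dL du dN]] : exists d, [/\ d \in L u, d != g u & forall y, e u y -> g y != d].
  by apply: not_frozen_free; case: Ubu.
have ebu : e b u by rewrite e_sym star.
apply: (reaches_pass_colour Og uS bS ebu dL du dN (frozen_nbr_colour Fb ebu)) => [z ebz zu|O2].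
  exact: frozen_nbr_neq Fb ebz ebu zu.
apply: reaches_no_blocker O2 _; apply: only_blocker_removed onlyb _ _ => [|x _ xu xb].
  by rewrite recolour_at -gb gP // e_sym.
by rewrite !recolour_other.
Qed.

(* Moving [u] to [d] and then [b2] to [g u] turns [b2] into a deletable leaf, and
   leaves [g u] free at [w]. *)
Lemma two_blockers_frozen_rest g b1 b2 d : fixed_off S f0 g -> blocker g b1 -> blocker g b2 ->
  b1 != b2 -> d != c -> (forall y, e b1 y -> g y != d) ->
  frozen e L (recolour g b1 d) u -> frozen e L (recolour g b1 d) w ->
  frozen e L (recolour g b1 d) b2 -> reaches g.
Proof.
move=> Og B1 B2; case: (B1) (B2) => [b1S b1u gb1] [b2S b2u gb2] b12 dc dN.
set g1 := recolour g b1 d => Fu Fw Fb2; have [[_ gP] _] := Og.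
have g1E y : y != b1 -> g1 y = g y by apply: recolour_other.
have g1b1 : g1 b1 = d by apply: recolour_at.
have other y x z : frozen e L g1 y -> e y x -> e y z -> z != x -> z != b1 -> g z != g1 x.
  by move=> Fy eyx eyz zx zb1; rewrite -g1E // (frozen_nbr_neq Fy eyz eyx zx).
have [eub1 eb2u ewu] : [/\ e u b1, e b2 u & e w u].
  by split; [apply: star | rewrite e_sym star | rewrite e_sym].
have [b2w wu] : b2 != w /\ w != u by rewrite (blocker_neq_w Og) // eq_sym edge_neq.
have nb12 : ~~ e b1 b2 by apply/negP => /gP; rewrite gb1 gb2 eqxx.
have nwb2 : ~~ e w b2.
  by apply: contra cw => /(frozen_nbr_colour Fw); rewrite g1E 1?eq_sym // gb2.
have g1u : g1 u = g u by rewrite g1E // eq_sym.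
have [ad aq ac] : [/\ g u != d, g u != g w & g u != c].
  by rewrite dN 1?e_sym // gP // -gb1 gP.
have dN' y : e u y -> g y != d.
  move=> euy; have [->|yb1] := eqVneq y b1; first by rewrite gb1 eq_sym.
  by rewrite -g1b1 (other u).
apply: (reaches_pass_colour Og uS b2S eb2u _ _ dN') => [|||z eb2z zu|O2].
- by rewrite -g1b1 frozen_nbr_colour.
- by rewrite eq_sym.
- by rewrite -g1u frozen_nbr_colour.
- have zb1 : z != b1 by apply: contraNneq nb12 => <-; rewrite e_sym.
  by rewrite -g1u (other b2).
apply: (reaches_del b2S b2u b2w O2); first by rewrite recolour_at.
exists w; split; rewrite 1?eq_sym //; apply: (@free_not_frozen _ _ (g u)).
- by rewrite -g1u frozen_nbr_colour.
- by rewrite !recolour_other // eq_sym.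
move=> z ewz; have zb2 : z != b2 by apply: contraNneq nwb2 => <-.
rewrite recolour_other //; have [->|zu] := eqVneq z u; first by rewrite recolour_at eq_sym.
rewrite recolour_other //; have [->|zb1] := eqVneq z b1; first by rewrite gb1 eq_sym.
by rewrite -g1u (other w).
Qed.

Lemma two_blockers g b1 b2 : fixed_off S f0 g -> blocker g b1 -> blocker g b2 ->
  b1 != b2 -> ~ frozen e L g b1 -> reaches g.
Proof.
move=> Og B1 B2 b12 U1; have [b1S b1u gb1] := B1.
have [d [dL db1 dN]] := not_frozen_free U1.
case: (classic (exists y, [/\ y \in S, y != b1 & ~ frozen e L (recolour g b1 d) y])).
  move=> Uy; apply: (reaches_recolour Og b1S dL dN) => O1.
  by apply: reaches_del Uy; rewrite ?recolour_at -?gb1 ?(blocker_neq_w Og B1).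
move=> allF; have F y : y \in S -> y != b1 -> frozen e L (recolour g b1 d) y.
  by move=> yS yb1; apply: NNPP => Uy; apply: allF; exists y.
have [b2S _ _] := B2.
have wb1 : w != b1 by rewrite eq_sym (blocker_neq_w Og B1).
have [ub1 b21] : u != b1 /\ b2 != b1 by rewrite !(eq_sym _ b1).
have dc : d != c by rewrite -gb1.
exact: two_blockers_frozen_rest Og B1 B2 b12 dc dN (F u uS ub1) (F w wS wb1) (F b2 b2S b21).
Qed.

Lemma frozen_centre g b y : fixed_off S f0 g -> blocker g b -> frozen e L g b ->
  frozen e L g u -> y \in S -> ~ frozen e L g y -> reaches g.
Proof.
move=> Og Bb Fb Fu yS Uy; have [bS bu gb] := Bb; have [gL _] := Og.
have onlyb x : blocker g x -> x = b.
  case=> xS xu gx; apply: NNPP => /eqP xb.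
  by apply: (same_colour_nbrs_not_frozen (star xS xu) (star bS bu) xb _ Fu); rewrite gx gb.
have [yu yb] : y != u /\ y != b by split; apply/eqP => yE; apply: Uy; rewrite yE.
have [d [dL dy dN]] := not_frozen_free Uy.
have Uu : ~ frozen e L (recolour g y d) u.
  by apply: recolour_nbr_not_frozen; rewrite // e_sym star.
have Bb' : blocker (recolour g y d) b by split; rewrite // recolour_other // eq_sym.
have Uy' : ~ frozen e L (recolour g y d) y by apply: recolour_not_frozen.
apply: (reaches_recolour Og yS dL dN) => O1; have [dc|dc] := eqVneq d c.
  have By : blocker (recolour g y d) y by split; rewrite ?recolour_at.
  exact: two_blockers O1 By Bb' yb Uy'.
apply: one_blocker O1 Bb' _ (or_intror Uu) => x [xS xu].
have [->|xy] := eqVneq x y; first by rewrite recolour_at => /eqP; rewrite (negbTE dc).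
by rewrite recolour_other // => gx; apply: onlyb.
Qed.

Lemma two_frozen_blockers g b b2 : fixed_off S f0 g -> blocker g b -> blocker g b2 ->
  b2 != b -> frozen e L g b -> frozen e L g b2 -> ~ frozen e L g u -> reaches g.
Proof.
move=> Og Bb B2 b2b Fb Fb2 Uu; have [bS bu gb] := Bb; have [b2S b2u gb2] := B2.
have [[_ gP] _] := Og; have bw := blocker_neq_w Og Bb.
have [ebu eb2u] : e b u /\ e b2 u by rewrite !(e_sym _ u) !star.
have nb2b : ~~ e b2 b by apply/negP => /gP; rewrite gb gb2 eqxx.
have [d [dL du dN]] := not_frozen_free Uu.
have ac : g u != c by rewrite -gb gP // e_sym.
have Ub2 : ~ frozen e L (recolour (recolour g u d) b (g u)) b2.
  apply: (free_not_frozen (frozen_nbr_colour Fb2 eb2u)).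
    by rewrite !recolour_other // gb2.
  move=> y eb2y; have yb : y != b by apply: contraNneq nb2b => <-.
  rewrite recolour_other //; have [->|yu] := eqVneq y u; first by rewrite recolour_at.
  by rewrite recolour_other // (frozen_nbr_neq Fb2 eb2y eb2u).
apply: (reaches_pass_colour Og uS bS ebu dL du dN (frozen_nbr_colour Fb ebu)) => [z ebz zu|O2].
  exact: frozen_nbr_neq Fb ebz ebu zu.
by apply: reaches_del bS bu bw O2 _ _; [rewrite recolour_at | exists b2].
Qed.

Lemma star_reaches g : fixed_off S f0 g ->
  (exists2 y, y \in S & ~ frozen e L g y) -> reaches g.
Proof.
move=> Og [y yS Uy].
case: (classic (exists b, blocker g b)) => [[b Bb]|noB]; last first.
  by apply: reaches_no_blocker Og _ => x Bx; apply: noB; exists x.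
case: (classic (exists b1, blocker g b1 /\ ~ frozen e L g b1)) => [[b1 [B1 U1]]|allF].
  case: (classic (exists b2, blocker g b2 /\ b2 != b1)) => [[b2 [B2 b21]]|only1].
    by apply: two_blockers Og B1 B2 _ U1; rewrite eq_sym.
  apply: one_blocker Og B1 _ (or_introl U1) => x Bx.
  by apply: NNPP => /eqP xb1; apply: only1; exists x.
have Fb x : blocker g x -> frozen e L g x.
  by move=> Bx; apply: NNPP => Ux; apply: allF; exists x.
case: (classic (frozen e L g u)) => [Fu|Uu].
  exact: frozen_centre Og Bb (Fb b Bb) Fu yS Uy.
case: (classic (exists b2, blocker g b2 /\ b2 != b)) => [[b2 [B2 b2b]]|only1].
  exact: two_frozen_blockers Og Bb B2 b2b (Fb b Bb) (Fb b2 B2) Uu.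
apply: one_blocker Og Bb _ (or_intror Uu) => x Bx.
by apply: NNPP => /eqP xb; apply: only1; exists x.
Qed.

End Star.

Variables (h : T -> nat) (p : T -> T).
Hypotheses (h_root : forall x, h x = 0 -> x = u) (h_nbr : forall x, e u x -> h x <= 1).

Lemma low_tree_star S : rooted_tree S u h p ->
  (forall x, x \in S -> x != u -> h x <= 1) -> forall x, x \in S -> x != u -> e u x.
Proof.
move=> tree low x xS xu; have [_ ep hp] := tree x xS xu.
have /h_root <- // : h (p x) = 0 by move: (low x xS xu) hp; lia.
by rewrite e_sym.
Qed.

(* Delete the highest vertex [z] of [S :\ u]. When all heights are at most 1,
   [S] is a star centred at [u]. *)
Lemma reaches_unfrozen S f : u \in S -> w \in S -> rooted_tree S u h p ->
  Lcolouring e L f -> c \in avail f S u ->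
  (exists2 y, y \in S & ~ frozen e L f y) -> reaches f.
Proof.
have [n] := ubnP #|S|; elim: n => // n IH in S f *.
rewrite ltnS => leSn uS wS tree fL cu [y0 y0S U0].
have del z g : z \in S -> z != u -> z != w ->
    (forall x, x \in S -> x != u -> h x <= h z) ->
    fixed_off S f g -> ~~ e u z \/ g z != c ->
    (exists y, [/\ y \in S, y != z & ~ frozen e L g y]) -> reaches g.
  move=> zS zu zw zmax [gL gf] zc [y [yS yz Uy]].
  have cu' : c \in avail g S u by rewrite (avail_ext _ gf).
  apply: (IH (S :\ z) g _ _ _ (rooted_tree_del tree zmax) gL _ _).
  - by move: leSn; rewrite (cardsD1 z S) zS.
  - by rewrite in_setD1 eq_sym zu.
  - by rewrite in_setD1 eq_sym zw.
  - by case: zc => [nuz|gz]; [rewrite avail_del_far | rewrite avail_del_mem // eq_sym].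
  - by exists y; rewrite // in_setD1 yz.
have fixed_f : fixed_off S f f by [].
have wSu : w \in S :\ u by rewrite in_setD1 eq_sym edge_neq.
have [z /setD1P[zu zS] zmax] := exists_argmax h wSu.
have {}zmax x : x \in S -> x != u -> h x <= h z.
  by move=> xS xu; apply: zmax; rewrite in_setD1 xu.
have [hz1|hz2] := leqP (h z) 1.
  have star := low_tree_star tree (fun x xS xu => leq_trans (zmax x xS xu) hz1).
  apply: (star_reaches uS wS cu star) fixed_f _; last by exists y0.
  move=> z' g z'S z'u z'w Og gz'; apply: (del _ _ z'S z'u z'w _ Og (or_intror gz')).
  move=> x xS xu; apply: leq_trans (zmax x xS xu) (leq_trans hz1 _).
  by rewrite lt0n; apply: contra_neq z'u; apply: h_root.
have nuz : ~~ e u z by apply/negP => /h_nbr; rewrite leqNgt hz2.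
have zw : z != w by apply: contraNneq nuz => ->.
case: (classic (exists y, [/\ y \in S, y != z & ~ frozen e L f y])) => [Uy|onlyz].
  exact: del _ _ zS zu zw zmax fixed_f (or_introl nuz) Uy.
have y0z : y0 = z by apply: NNPP => /eqP y0z; apply: onlyz; exists y0.
have [pS ezp hp] := tree z zS zu.
have pz : p z != z by apply: contraTneq hp => ->; rewrite ltnn.
have Fp : frozen e L f (p z) by apply: NNPP => Up; apply: onlyz; exists (p z).
rewrite y0z in U0; have [d [dL dz dN]] := not_frozen_free U0.
have [fL' ff'] := recolour_reconf fL dL dN.
apply: reaches_reconf ff' (del _ _ zS zu zw zmax _ (or_introl nuz) _).
  by split=> // x xS; rewrite recolour_other //; apply: contraNneq xS => ->.
by exists (p z); split=> //; apply: recolour_nbr_not_frozen.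
Qed.

End ReachColour.

Lemma reconf_to_colour u w c f : connected_graph e -> e u w -> c \in L u -> c \notin L w ->
  Lcolouring e L f -> unfrozen e L f -> exists2 g, reconf e L f g & g u = c.
Proof.
move=> conn euw cu cw fL [y Uy].
have tree : rooted_tree setT u (dist e u) (parent e u).
  by move=> x _ xu; have [_ ep hp] := parentP e_sym (conn u x) xu; rewrite in_setT.
apply: (reaches_unfrozen euw cw (fun x => dist_eq0 (conn u x)) (@dist_adj _ _ u))
  (in_setT u) (in_setT w) tree fL _ _; first by rewrite avail_setT.
by exists y; rewrite ?in_setT.
Qed.

Lemma reconf_fixed_vertex v w f g : connected_minus e v -> e v w -> f v \notin L w ->
  Lcolouring e L f -> Lcolouring e L g -> f v = g v -> reconf e L f g.
Proof.
move=> cm evw fvw fL gL fgv; have wv : w != v by rewrite eq_sym edge_neq.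
pose e' := [rel a b | [&& e a b, a != v & b != v]].
have e'_sym : symmetric e' by move=> a b /=; rewrite e_sym [(b != v) && _]andbC.
have tree : rooted_tree (setT :\ v) w (dist e' w) (parent e' w).
  move=> x; rewrite !inE andbT => xv xw.
  have [_ /and3P[ep _ pv] hp] := parentP e'_sym (cm w x wv xv) xw.
  by rewrite pv.
apply: reconf_agree_outside tree fL gL _ _ => [x /notin_setD1[->|]|x]; rewrite ?inE //.
(* Only [v] is coloured outside [setT :\ v]: it costs [x] at most one colour, and
   none when [x = w] since [f v \notin L w]. *)
rewrite andbT => xv; have := card_nbhd_del x (in_setT v); rewrite setIT.
have := Ldeg x; rewrite /deg -/(nbhd x).
case exv: (e x v); last first.
  have xw : x != w by apply: contraFneq exv => ->; rewrite e_sym.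
  by rewrite avail_del_far ?exv // avail_setT (negbTE xw); lia.
have sub : L x :\ f v \subset avail f (setT :\ v) x.
  apply/subsetP => d /setD1P[dfv dL]; apply/setDP; split=> //.
  apply/imsetP => -[y /setDP[_]]; rewrite in_setD1 in_setT andbT negbK => /eqP -> dE.
  by rewrite dE eqxx in dfv.
move: (subset_leq_card sub); rewrite (cardsD1 (f v) (L x)).
have [->|xw] := eqVneq x w; first by rewrite (negbTE fvw); lia.
by case: (f v \in L x); lia.
Qed.

End Colourings.

Theorem mainTheorem18 (T C : finType) (e : rel T) (L : T -> {set C}) :
  simple_graph e ->
  connected_graph e ->
  (forall u : T, deg e u + 1 <= #|L u|) ->
  (exists v w : T, [/\ e v w, ~~ (L v \subset L w) & connected_minus e v]) ->
  forall alpha beta : T -> C,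
    Lcolouring e L alpha -> Lcolouring e L beta ->
    unfrozen e L alpha -> unfrozen e L beta ->
    reconf e L alpha beta.
Proof.
move=> [e_sym e_irr] conn Ldeg [v [w [evw /subsetPn[c cv cw] cm]]] al be alL beL alU beU.
have [al' alal' al'v] := reconf_to_colour e_sym e_irr Ldeg conn evw cv cw alL alU.
have [be' bebe' be'v] := reconf_to_colour e_sym e_irr Ldeg conn evw cv cw beL beU.
have al'be' : reconf e L al' be'.
  apply: (reconf_fixed_vertex e_sym e_irr Ldeg cm evw); rewrite ?al'v ?be'v //.
  - exact: reconf_colouring alal' alL.
  - exact: reconf_colouring bebe' beL.
exact: reconf_trans alal' (reconf_trans al'be' (reconf_sym bebe')).
Qed.
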